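(* Let $\tau$ be a trace on $\widehat{TL}_3(q)$, let $X=g_{\sigma_2}g_{\sigma_1}g_{a_3}$, $u=g_{\sigma_2}g_{a_3}g_{\sigma_2}^{-1}$, and let $r\le s$ be positive integers. Then there exist an integer $0\le h\le s$, elements $c_0,\dots,c_h\in B$ and finitely many Markov elements $M_i$ such that $$\tau\Big((g_{\sigma_1}u)^{r}g_{\sigma_1}g_{\sigma_2}(g_{\sigma_1}u)^{s}g_{\sigma_1}g_{\sigma_2}\Big)=\tau\Big(\sum_{j=0}^{h}c_jX^{j}+\sum_iM_i\Big).$$
   Context: $K$ is an integral domain of characteristic $0$, $q\in K$ invertible and a square, $q+1$ invertible. $\widehat{TL}_3(q)$ is the unital $K$-algebra generated by $g_{\sigma_1},g_{\sigma_2},g_{a_3}$ with relations $g_{\sigma_1}g_{\sigma_2}g_{\sigma_1}=g_{\sigma_2}g_{\sigma_1}g_{\sigma_2}$, $g_{\sigma_i}g_{a_3}g_{\sigma_i}=g_{a_3}g_{\sigma_i}g_{a_3}$ ($i=1,2$), $x^2=(q-1)x+q$ for each generator $x$, and $V(g_{\sigma_1},g_{\sigma_2})=V(g_{\sigma_1},g_{a_3})=V(g_{\sigma_2},g_{a_3})=0$ where $V(x,y)=xyx+xy+yx+x+y+1$. $B$ is the unital subalgebra generated by $g_{\sigma_1}$ and $u$. A Markov element is an element $A\,g_{\sigma_2}^{\epsilon}A'$ with $A,A'\in B$, $\epsilon\in\{0,1\}$. A trace is a $K$-linear map $\tau:\widehat{TL}_3(q)\to K$ with $\tau(xy)=\tau(yx)$.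 *)

From HB Require Import structures.
From mathcomp Require Import all_boot all_order all_algebra.
Set Implicit Arguments. Unset Strict Implicit. Unset Printing Implicit Defensive.
Import Order.TTheory GRing.Theory Num.Theory.
Local Open Scope ring_scope.

Definition Vrel (R : ringType) (x y : R) : R :=
  x * y * x + x * y + y * x + x + y + 1.

(* The defining relations of \widehat{TL}_3(q), for elements g1 = g_{sigma_1},
   g2 = g_{sigma_2}, g3 = g_{a_3} of a K-algebra A. *)
Definition TL3hat_rels (K : comRingType) (A : algType K) (q : K)
    (g1 g2 g3 : A) : Prop :=
  [/\ g1 * g2 * g1 = g2 * g1 * g2,
      g1 * g3 * g1 = g3 * g1 * g3,
      g2 * g3 * g2 = g3 * g2 * g3,
      [/\ g1 ^+ 2 = (q - 1) *: g1 + q%:A,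
          g2 ^+ 2 = (q - 1) *: g2 + q%:A &
          g3 ^+ 2 = (q - 1) *: g3 + q%:A] &
      [/\ Vrel g1 g2 = 0, Vrel g1 g3 = 0 & Vrel g2 g3 = 0]].

Inductive in_subalg2 (K : comRingType) (A : algType K) (a b : A) : A -> Prop :=
  | sub2_1 : in_subalg2 a b 1
  | sub2_a : in_subalg2 a b a
  | sub2_b : in_subalg2 a b b
  | sub2_add x y : in_subalg2 a b x -> in_subalg2 a b y -> in_subalg2 a b (x + y)
  | sub2_scale (k : K) x : in_subalg2 a b x -> in_subalg2 a b (k *: x)
  | sub2_mul x y : in_subalg2 a b x -> in_subalg2 a b y -> in_subalg2 a b (x * y).

Definition markov_elt (K : comRingType) (A : algType K) (g1 u g2 : A) (m : A) : Prop :=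
  exists (a a' : A) (eps : bool),
    [/\ in_subalg2 g1 u a, in_subalg2 g1 u a' & m = a * g2 ^+ eps * a'].

Definition is_trace (K : comRingType) (A : algType K) (tau : A -> K) : Prop :=
  (forall (k : K) (x y : A), tau (k *: x + y) = k * tau x + tau y) /\
  (forall x y : A, tau (x * y) = tau (y * x)).

From HB Require Import structures.
From mathcomp Require Import all_boot all_order all_algebra ring zify.
Set Implicit Arguments. Unset Strict Implicit. Unset Printing Implicit Defensive.
Import Order.TTheory GRing.Theory Num.Theory.
Local Open Scope ring_scope.

(* Put f_i = (g_i + 1)/(q + 1).  The quadratic relations make each f_i an
   idempotent, and V(g_i, g_j) = 0 gives f_i f_j f_i = kap f_i for i <> j, with
   kap = q/(q + 1)^2.  Hence the algebra generated by g1, g2, g3 and g2^-1 is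
   spanned by the cyclic words f_i f_(i+-1) f_(i+-2) ..., and under a trace a
   word of length 3k + 1 or 3k + 2 (k > 0) has the trace of one of length 3k,
   which up to rotation is U^k or D^k with U = f1 f2 f3 and D = f1 f3 f2.
   The conjugate f2' = g2 f3 g2^-1 = (u + 1)/(q + 1) lies in B, and modulo
   shorter words
     (f1 f2')^k = al^k U^k + be^k D^k,   (f1 f2')^(k-1) f1 f2' f2 = ga be^(k-1) D^k
   for units al, be, ga.  The left-hand sides lie in B and in B g2 + B, so by
   induction on the length every element of the algebra has the trace of an
   element of B plus Markov elements. *)

Lemma mul_scale_sub1 (K : comNzRingType) (A : algType K) (a b : K) (e f : A) :
  (a *: e - 1) * f * (b *: e - 1) =
  (a * b) *: (e * f * e) - a *: (e * f) - b *: (f * e) + f.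
Proof.
rewrite mulrBl mul1r mulrBr mulrBl !mulr1 -!scalerAl -!scalerAr scalerA.
by rewrite !opprB !addrA [RHS](ACl (1*3*4*2)).
Qed.

Lemma VrelE (R : nzRingType) (x y : R) :
  Vrel x y = (x + 1) * y * (x + 1) + (x + 1).
Proof.
rewrite /Vrel !mulrDl !mulrDr !mul1r !mulr1.
by rewrite !addrA [RHS](ACl (1*2*3*5*4*6)).
Qed.

Lemma Vrel_sym (R : nzRingType) (x y : R) :
  x * y * x = y * x * y -> Vrel y x = Vrel x y.
Proof. by move=> braid; rewrite /Vrel braid [RHS](ACl (1*3*2*5*4*6)). Qed.

(* Locked, so that rewriting inside products of these idempotents does not
   unfold them. *)
HB.lock Definition hecke_idem (K : comUnitRingType) (A : algType K) (q : K)
    (x : A) : A :=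
  (q + 1)^-1 *: (x + 1).

Section HeckeIdempotent.
Variables (K : comUnitRingType) (A : algType K) (q : K).
Hypothesis q1_unit : q + 1 \is a GRing.unit.

Definition tl_weight : K := q * (q + 1)^-1 * (q + 1)^-1.

Lemma hecke_idemK (x : A) : (q + 1) *: hecke_idem q x - 1 = x.
Proof. by rewrite hecke_idem.unlock scalerA mulrV // scale1r addrK. Qed.

Variable x : A.
Hypothesis x_quad : x ^+ 2 = (q - 1) *: x + q%:A.

Lemma hecke_sq_shift : (x + 1) * (x + 1) = (q + 1) *: (x + 1).
Proof.
rewrite mulrDl mulrDr !mul1r mulr1 -expr2 x_quad scalerBl scale1r.
rewrite scalerDl scalerDr !scale1r -/(q%:A).
by rewrite !addrA [q *: x - x + _ + x]addrAC subrK.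
Qed.

Lemma mul_hecke_idem : hecke_idem q x * hecke_idem q x = hecke_idem q x.
Proof.
rewrite hecke_idem.unlock -scalerAl -scalerAr hecke_sq_shift !scalerA.
by rewrite -mulrA mulVr ?mulr1.
Qed.

Lemma hecke_idem_tl y : Vrel x y = 0 ->
  hecke_idem q x * hecke_idem q y * hecke_idem q x = tl_weight *: hecke_idem q x.
Proof.
move=> V0.
have sandwich : (x + 1) * y * (x + 1) = - (x + 1).
  by apply/eqP; rewrite -addr_eq0 -VrelE V0.
have sandwich1 : (x + 1) * (y + 1) * (x + 1) = q *: (x + 1).
  rewrite [(x + 1) * (y + 1)]mulrDr mulr1 mulrDl sandwich hecke_sq_shift scalerDl scale1r.
  by rewrite addrC addrK.
rewrite hecke_idem.unlock -!scalerAl -!scalerAr -scalerAl sandwich1 !scalerA.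
by congr (_ *: _); rewrite /tl_weight; ring.
Qed.

Hypothesis q_unit : q \is a GRing.unit.

Lemma hecke_mulrV : x * (((q + 1) / q) *: hecke_idem q x - 1) = 1.
Proof.
have := mul_scale_sub1 (q + 1) ((q + 1) / q) (hecke_idem q x) 1.
rewrite !mulr1 mul1r hecke_idemK mul_hecke_idem => ->; rewrite -!scalerBl.
have -> : (q + 1) * ((q + 1) / q) - (q + 1) - (q + 1) / q = (q + 1) * (q / q - 1).
  by ring.
by rewrite divrr // subrr mulr0 scale0r add0r.
Qed.

End HeckeIdempotent.

Section CyclicWords.
Variables (K : comNzRingType) (A : algType K) (kap : K) (E : nat -> A).
Hypothesis E_mod : forall i, E (i %% 3) = E i.
Hypothesis E_idem : forall i, E i * E i = E i.
Hypothesis E_tl : forall i j, (i %% 3 != j %% 3)%N -> E i * E j * E i = kap *: E i.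

Definition step (b : bool) : nat := if b then 1 else 2.

Fixpoint word (i : nat) (b : bool) (m : nat) : A :=
  if m is m'.+1 then E i * word (i + step b) b m' else 1.

Lemma mod3_cases i : [\/ i %% 3 = 0, i %% 3 = 1 | i %% 3 = 2]%N.
Proof.
have := ltn_pmod i (isT : (0 < 3)%N).
by case: (i %% 3)%N => [|[|[|//]]] _; [apply: Or31 | apply: Or32 | apply: Or33].
Qed.

Lemma E_eq i j : (i %% 3 = j %% 3)%N -> E i = E j.
Proof. by move=> eq_ij; rewrite -E_mod eq_ij E_mod. Qed.

Lemma word_mod i b m : word (i %% 3) b m = word i b m.
Proof.
elim: m i => [//|m IH] i /=.
by rewrite E_mod -(IH (i %% 3 + _)%N) modnDml IH.
Qed.

Lemma word_eq i j b m : (i %% 3 = j %% 3)%N -> word i b m = word j b m.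
Proof. by move=> eq_ij; rewrite -word_mod eq_ij word_mod. Qed.

Lemma step_neq i b : (i %% 3 != (i + step b) %% 3)%N.
Proof. by rewrite -(modnDml i); case: (mod3_cases i) => ->; case: b. Qed.

Lemma word_rcons i b m : word i b m.+1 = word i b m * E (i + m * step b).
Proof.
elim: m i => [|m IH] i; first by rewrite /= mul1r mulr1 addn0.
rewrite -[word i b m.+2]/(E i * word (i + step b) b m.+1) IH.
by rewrite mulrA mulSn addnA.
Qed.

Lemma word_cat i b n m : word i b (n + m) = word i b n * word (i + n * step b) b m.
Proof.
elim: n i => [|n IH] i /=; first by rewrite mul1r addn0.
by rewrite IH mulrA mulSn addnA.
Qed.

Lemma word_pow b k : word 0 b (3 * k) = word 0 b 3 ^+ k.
Proof.
elim: k => [|k IH]; first by rewrite muln0 expr0.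
rewrite mulnS word_cat exprS -IH; congr (_ * _).
by apply: word_eq; case: (b).
Qed.

Inductive wspan (n : nat) : A -> Prop :=
| wspan_word i b m : (m <= n)%N -> wspan n (word i b m)
| wspan0 : wspan n 0
| wspanD x y : wspan n x -> wspan n y -> wspan n (x + y)
| wspanZ (k : K) x : wspan n x -> wspan n (k *: x).

Lemma wspan_mono n n' x : (n <= n')%N -> wspan n x -> wspan n' x.
Proof.
move=> le_nn'; elim=> [i b m le_mn | | y z _ wy _ wz | k y _ wy].
- by apply: wspan_word; apply: leq_trans le_nn'.
- exact: wspan0.
- exact: wspanD.
- exact: wspanZ.
Qed.

Lemma wspanB n x y : wspan n x -> wspan n y -> wspan n (x - y).
Proof. by move=> wx wy; apply: wspanD => //; rewrite -scaleN1r; apply: wspanZ. Qed.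

Lemma wspan1 n : wspan n 1.
Proof. exact: (@wspan_word n 0 true 0). Qed.

Lemma wspan_E n i : wspan n.+1 (E i).
Proof. by rewrite -[E i]mulr1; apply: (@wspan_word _ i true 1). Qed.

Lemma step_cases i j b :
  [\/ (j %% 3 = i %% 3)%N, ((j + step b) %% 3 = i %% 3)%N |
      (j %% 3 = (i + step b) %% 3)%N /\ (j %% 3 != i %% 3)%N].
Proof.
rewrite -(modnDml j) -(modnDml i).
by case: (mod3_cases i) => ->; case: (mod3_cases j) => ->; case: b;
  by [apply: Or31 | apply: Or32 | apply: Or33].
Qed.

Lemma wspan_E_word j i b m : wspan m.+1 (E j * word i b m).
Proof.
case: m => [|m]; first exact: (@wspan_word _ j b 1).
rewrite [word i b m.+1]/=.
case: (step_cases i j b) => [ji | jsi | [ji_s ji]].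
- by rewrite (E_eq ji) mulrA E_idem; exact: (wspan_word i b (leqnSn m.+1)).
- have -> : E j * (E i * word (i + step b) b m) = word j b m.+2.
    rewrite /= (E_eq jsi); congr (_ * (_ * _)); apply: word_eq.
    by rewrite -modnDml -jsi modnDml.
  exact: wspan_word.
(* [E j] is the letter following [E i]: a word of length one changes
   direction, a longer one shrinks by [E j * E i * E j = kap *: E j]. *)
case: m => [|m].
  have -> : E j * (E i * word (i + step b) b 0) = word j (~~ b) 2.
    rewrite /=; congr (_ * (_ * _)); apply: E_eq.
    have step_inv : (step b + step (~~ b) = 3)%N by case: (b).
    by rewrite -modnDml ji_s modnDml -addnA step_inv modnDr.
  exact: wspan_word.
rewrite [word _ b m.+1]/= -(E_eq ji_s) !mulrA E_tl // -scalerAl.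
rewrite (word_eq _ _ (j := j + step b)); last by rewrite -modnDml -ji_s modnDml.
by apply/wspanZ/(@wspan_word _ j b m.+1); lia.
Qed.

Lemma wspan_El j n x : wspan n x -> wspan n.+1 (E j * x).
Proof.
elim=> [i b m le_mn | | y z _ wy _ wz | k y _ wy].
- exact: wspan_mono (wspan_E_word j i b m).
- by rewrite mulr0; exact: wspan0.
- by rewrite mulrDr; exact: wspanD.
- by rewrite -scalerAr; exact: wspanZ.
Qed.

Lemma wspan_wordl i b k m y : wspan m y -> wspan (k + m) (word i b k * y).
Proof.
move=> wy; elim: k i => [|k IH] i /=; first by rewrite mul1r.
by rewrite -mulrA; apply: wspan_El.
Qed.

Lemma wspanM n m x y : wspan n x -> wspan m y -> wspan (n + m) (x * y).
Proof.
move=> wx wy; elim: wx => [i b k le_kn | | x1 x2 _ w1 _ w2 | k x1 _ w1].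
- by apply: wspan_mono (wspan_wordl i b k wy); rewrite leq_add2r.
- by rewrite mul0r; exact: wspan0.
- by rewrite mulrDl; exact: wspanD.
- by rewrite -scalerAl; exact: wspanZ.
Qed.

Lemma wspanX n k x : wspan n x -> wspan (n * k) (x ^+ k).
Proof.
move=> wx; elim: k => [|k IH]; first by rewrite muln0 expr0; apply: wspan1.
by rewrite exprS mulnS; apply: wspanM.
Qed.

Section Trace.
Variable tau : A -> K.
Hypothesis tauC : forall x y, tau (x * y) = tau (y * x).
Hypothesis tauZ : forall k x, tau (k *: x) = k * tau x.

Lemma E_shift i j b : (j %% 3 = 0)%N -> E (i + j * step b) = E i.
Proof. by move=> j0; apply: E_eq; rewrite -modnDmr -modnMml j0 mod0n addn0. Qed.

Lemma tau_word_rot n i b : (n %% 3 = 0)%N ->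
  tau (word i b n) = tau (word (i + step b) b n).
Proof.
case: n => [//|n] n0.
rewrite -[word i b n.+1]/(E i * word (i + step b) b n) word_rcons tauC.
by rewrite -addnA -mulSn E_shift.
Qed.

Lemma tau_word_start n i b : (n %% 3 = 0)%N -> tau (word i b n) = tau (word 0 b n).
Proof.
move=> n0; rewrite -word_mod.
have rot j := tau_word_rot j b n0.
case: (mod3_cases i) => ->; case: b rot => rot //.
- by rewrite (rot 1) (word_eq (j := 0)).
- by rewrite (rot 2) (word_eq (j := 0)).
Qed.

Lemma tau_word_succ n i b : (0 < n)%N -> (n %% 3 = 0)%N ->
  tau (word i b n.+1) = tau (word i b n).
Proof.
case: n => [//|n] _ n0.
rewrite word_rcons E_shift // tauC.
by rewrite -[word i b n.+1]/(E i * word (i + step b) b n) mulrA E_idem.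
Qed.

Lemma tau_word_succ2 n i b : (0 < n)%N -> (n %% 3 = 0)%N ->
  tau (word i b n.+2) = kap * tau (word (i + step b) b n).
Proof.
case: n => [//|n] _ n0.
rewrite -[word i b _]/(E i * word (i + step b) b n.+2) word_rcons.
rewrite E_shift // mulrA tauC.
rewrite -[word _ b n.+1]/(E (i + step b) * word (i + step b + step b) b n).
by rewrite !mulrA E_tl 1?eq_sym ?step_neq // -scalerAl tauZ.
Qed.

Lemma tau_word2 i b : tau (word i b 2) = kap * tau (E i).
Proof.
by rewrite /= mulr1 -{1}E_idem -mulrA tauC E_tl ?step_neq // tauZ.
Qed.

End Trace.
End CyclicWords.

Section Reduction.
Variables (K : comUnitRingType) (q : K).
Hypotheses (q_unit : q \is a GRing.unit) (q1_unit : q + 1 \is a GRing.unit).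
Variables (A : algType K) (g1 g2 g3 g2inv : A).
Hypothesis rels : TL3hat_rels q g1 g2 g3.
Hypothesis g2K : g2 * g2inv = 1 /\ g2inv * g2 = 1.

Let f1 := hecke_idem q g1.
Let f2 := hecke_idem q g2.
Let f3 := hecke_idem q g3.
Let kap := tl_weight q.

Definition tlE (i : nat) : A := nth 0 [:: f1; f2; f3] (i %% 3).

Lemma tlE_mod i : tlE (i %% 3) = tlE i.
Proof. by rewrite /tlE modn_mod. Qed.

Lemma tlE_idem i : tlE i * tlE i = tlE i.
Proof.
have [_ _ _ [quad1 quad2 quad3] _] := rels.
by rewrite /tlE; case: (mod3_cases i) => -> /=; apply: mul_hecke_idem.
Qed.

Lemma tlE_tl i j : (i %% 3 != j %% 3)%N -> tlE i * tlE j * tlE i = kap *: tlE i.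
Proof.
have [br12 br13 br23 [quad1 quad2 quad3] [V12 V13 V23]] := rels.
rewrite /tlE; case: (mod3_cases i) => ->; case: (mod3_cases j) => -> //= _;
  apply: hecke_idem_tl => //; by rewrite Vrel_sym.
Qed.

Local Notation word := (word tlE).
Local Notation wspan := (wspan tlE).

Let U := f1 * f2 * f3.
Let D := f1 * f3 * f2.

Lemma wordU : word 0 true 3 = U.
Proof. by rewrite /= mulr1 !mulrA. Qed.

Lemma wordD : word 0 false 3 = D.
Proof. by rewrite /= mulr1 !mulrA. Qed.

Lemma g2invE : g2inv = ((q + 1) / q) *: f2 - 1.
Proof.
have [_ _ _ [_ quad2 _] _] := rels.
rewrite -[LHS]mulr1 -[in LHS](hecke_mulrV q1_unit quad2 q_unit).
by rewrite mulrA g2K.2 mul1r.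
Qed.

Let u := g2 * g3 * g2inv.
Let f2' := hecke_idem q u.
Let al := - (q + 1).
Let be := - ((q + 1) / q).
Let ga := be + 1.

Lemma f2'_conj : f2' = g2 * f3 * g2inv.
Proof.
by rewrite /f2' /f3 !hecke_idem.unlock -scalerAr -scalerAl mulrDr mulrDl mulr1 g2K.1.
Qed.

Lemma f2'E : f2' = f2 + al *: (f2 * f3) + be *: (f3 * f2) + f3.
Proof.
have [_ _ br23 [_ quad2 quad3] [_ _ V23]] := rels.
rewrite f2'_conj g2invE -{1}(hecke_idemK q1_unit g2) mul_scale_sub1.
rewrite hecke_idem_tl // scalerA.
have -> : (q + 1) * ((q + 1) / q) * kap = 1.
  rewrite /kap /tl_weight.
  have -> : (q + 1) * ((q + 1) / q) * (q * (q + 1)^-1 * (q + 1)^-1)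
      = ((q + 1) * (q + 1)^-1) ^+ 2 * (q / q) by ring.
  by rewrite divrr // mulrV // expr1n mulr1.
by rewrite scale1r /al /be !scaleNr.
Qed.

Lemma f1f2'E : f1 * f2' = al *: U + be *: D + (f1 * f2 + f1 * f3).
Proof.
rewrite f2'E !mulrDr -[f1 * (al *: _)]scalerAr -[f1 * (be *: _)]scalerAr !mulrA.
by rewrite !addrA [LHS](ACl (2*3*1*4)).
Qed.

Lemma f2'f2E : f2' * f2 = (1 + al * kap) *: f2 + ga *: (f3 * f2).
Proof.
have [_ _ _ [_ quad2 _] [_ _ V23]] := rels.
have f2f2 : f2 * f2 = f2 := mul_hecke_idem q1_unit quad2.
rewrite f2'E !mulrDl -[al *: _ * f2]scalerAl -[be *: _ * f2]scalerAl.
rewrite hecke_idem_tl // -[f3 * f2 * f2]mulrA f2f2 scalerA.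
by rewrite scalerDl scale1r scalerDl scale1r !addrA.
Qed.

Lemma f1f2'f2E : f1 * f2' * f2 = (1 + al * kap) *: (f1 * f2) + ga *: D.
Proof.
rewrite -mulrA f2'f2E mulrDr -[f1 * (_ *: f2)]scalerAr.
by rewrite -[f1 * (ga *: _)]scalerAr [f1 * (f3 * f2)]mulrA.
Qed.

Let spanM := wspanM tlE_mod tlE_idem tlE_tl.
Let spanX := wspanX tlE_mod tlE_idem tlE_tl.

Lemma wspan_f1 : wspan 1 f1. Proof. exact: wspan_E tlE 0 0. Qed.
Lemma wspan_f2 : wspan 1 f2. Proof. exact: wspan_E tlE 0 1. Qed.
Lemma wspan_f3 : wspan 1 f3. Proof. exact: wspan_E tlE 0 2. Qed.
Lemma wspan_U : wspan 3 U. Proof. by rewrite -wordU; apply: wspan_word. Qed.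
Lemma wspan_D : wspan 3 D. Proof. by rewrite -wordD; apply: wspan_word. Qed.

Lemma wspan_UD : wspan 4 (U * D).
Proof.
have -> : U * D = f1 * f2 * (f3 * f1 * f3) * f2 by rewrite /U /D !mulrA.
rewrite (@tlE_tl 2 0) // -scalerAr -!scalerAl; apply: wspanZ.
exact: spanM (spanM (spanM wspan_f1 wspan_f2) wspan_f3) wspan_f2.
Qed.

Lemma wspan_DU : wspan 4 (D * U).
Proof.
have -> : D * U = f1 * f3 * (f2 * f1 * f2) * f3 by rewrite /U /D !mulrA.
rewrite (@tlE_tl 1 0) // -scalerAr -!scalerAl; apply: wspanZ.
exact: spanM (spanM (spanM wspan_f1 wspan_f3) wspan_f2) wspan_f3.
Qed.

Lemma f1f2'_pow_approx k : exists2 f, wspan (3 * k + 2) f &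
  (f1 * f2') ^+ k.+1 = al ^+ k.+1 *: U ^+ k.+1 + be ^+ k.+1 *: D ^+ k.+1 + f.
Proof.
have span_f1f2f3 : wspan 2 (f1 * f2 + f1 * f3).
  exact: wspanD (spanM wspan_f1 wspan_f2) (spanM wspan_f1 wspan_f3).
elim: k => [|k [f span_f fE]]; first by exists (f1 * f2 + f1 * f3); rewrite // f1f2'E.
set L := al *: U + be *: D.
set P := al ^+ k.+1 *: U ^+ k.+1 + be ^+ k.+1 *: D ^+ k.+1.
have span_P : wspan (3 * k.+1) P.
  by apply: wspanD; apply: wspanZ; apply: spanX; [apply: wspan_U | apply: wspan_D].
exists ((al * be ^+ k.+1) *: (U * D ^+ k.+1) + (be * al ^+ k.+1) *: (D * U ^+ k.+1)
        + (L * f + (f1 * f2 + f1 * f3) * (P + f))).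
  apply: wspanD; [apply: wspanD | apply: wspanD]; try apply: wspanZ.
  - rewrite exprS mulrA; apply: wspan_mono (spanM wspan_UD (spanX k wspan_D)); lia.
  - rewrite exprS mulrA; apply: wspan_mono (spanM wspan_DU (spanX k wspan_U)); lia.
  - apply: wspan_mono (spanM (_ : wspan 3 L) span_f); first lia.
    by apply: wspanD; apply: wspanZ; [apply: wspan_U | apply: wspan_D].
  - apply: wspan_mono (spanM span_f1f2f3 (_ : wspan (3 * k.+1) (P + f))); first lia.
    by apply: wspanD => //; apply: wspan_mono span_f; lia.
have LP : L * P = al ^+ k.+2 *: U ^+ k.+2 + be ^+ k.+2 *: D ^+ k.+2 +
   ((al * be ^+ k.+1) *: (U * D ^+ k.+1) + (be * al ^+ k.+1) *: (D * U ^+ k.+1)).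
  rewrite /L /P !mulrDl !mulrDr -!scalerAl -!scalerAr !scalerA -!exprS.
  by rewrite !addrA (ACl (1*4*2*3)).
by rewrite exprS fE f1f2'E -/L mulrDl mulrDr LP !addrA.
Qed.

Lemma f1f2'_pow_f2_approx k : exists2 f, wspan (3 * k + 2) f &
  (f1 * f2') ^+ k * (f1 * f2' * f2) = (ga * be ^+ k) *: D ^+ k.+1 + f.
Proof.
set c := 1 + al * kap.
have span_f1f2 : wspan 2 (c *: (f1 * f2)).
  by apply: wspanZ; exact: spanM wspan_f1 wspan_f2.
case: k => [|k].
  by exists (c *: (f1 * f2)); rewrite // f1f2'f2E expr0 mul1r mulr1 expr1 addrC.
have [f span_f ->] := f1f2'_pow_approx k.
set P := al ^+ k.+1 *: U ^+ k.+1 + be ^+ k.+1 *: D ^+ k.+1.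
exists ((al ^+ k.+1 * ga) *: (U ^+ k.+1 * D)
        + (P * (c *: (f1 * f2)) + f * (c *: (f1 * f2) + ga *: D))).
  apply: wspanD; [|apply: wspanD].
  - apply: wspanZ; rewrite exprSr -mulrA.
    apply: wspan_mono (spanM (spanX k wspan_U) wspan_UD); lia.
  - apply: wspan_mono (spanM (_ : wspan (3 * k.+1) P) span_f1f2); first lia.
    by apply: wspanD; apply: wspanZ; apply: spanX; [apply: wspan_U | apply: wspan_D].
  - apply: wspan_mono (spanM span_f (_ : wspan 3 (c *: (f1 * f2) + ga *: D))); first lia.
    apply: wspanD; last by apply/wspanZ/wspan_D.
    exact: wspan_mono span_f1f2.
have PD : P * (ga *: D) =
    (al ^+ k.+1 * ga) *: (U ^+ k.+1 * D) + (ga * be ^+ k.+1) *: D ^+ k.+2.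
  rewrite /P mulrDl -!scalerAl -!scalerAr !scalerA -exprSr.
  by rewrite [be ^+ k.+1 * ga]mulrC.
rewrite f1f2'f2E -/c mulrDl mulrDr PD.
by rewrite !addrA (ACl (3*2*1*4)).
Qed.

Variable tau : A -> K.
Hypothesis tau_trace : is_trace tau.

Lemma tauC x y : tau (x * y) = tau (y * x).
Proof. by case: tau_trace. Qed.

Lemma tauD x y : tau (x + y) = tau x + tau y.
Proof. by case: tau_trace => lin _; rewrite -[x]scale1r lin mul1r scale1r. Qed.

Lemma tau0 : tau 0 = 0.
Proof. by apply: (@addrI _ (tau 0)); rewrite -tauD !addr0. Qed.

Lemma tauZ k x : tau (k *: x) = k * tau x.
Proof. by case: tau_trace => lin _; have := lin k x 0; rewrite !addr0 tau0 addr0. Qed.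

Definition markov_reducible (x : A) : Prop :=
  exists b (ms : seq A), [/\ in_subalg2 g1 u b,
    forall i, (i < size ms)%N -> markov_elt g1 u g2 (nth 0 ms i) &
    tau x = tau (b + \sum_(m <- ms) m)].

Lemma subalg0 : in_subalg2 g1 u 0.
Proof. by rewrite -(scale0r 1); apply/sub2_scale/sub2_1. Qed.

Lemma reducible_subalg b : in_subalg2 g1 u b -> markov_reducible b.
Proof. by move=> Bb; exists b, [::]; rewrite big_nil addr0. Qed.

Lemma reducible_subalg_g2 b : in_subalg2 g1 u b -> markov_reducible (b * g2).
Proof.
move=> Bb; exists 0, [:: b * g2]; split; first exact: subalg0.
  by case=> // _; exists b, 1, true; rewrite expr1 mulr1; split=> //; apply: sub2_1.
by rewrite big_seq1 add0r.
Qed.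

Lemma reducibleD x y :
  markov_reducible x -> markov_reducible y -> markov_reducible (x + y).
Proof.
move=> [b [ms [Bb Mms tau_x]]] [b' [ms' [Bb' Mms' tau_y]]].
exists (b + b'), (ms ++ ms'); split; first exact: sub2_add.
  move=> i; rewrite size_cat nth_cat => lt_i.
  case: ifP => [|/negbT]; first exact: Mms.
  by rewrite -leqNgt => le_i; apply: Mms'; rewrite -(ltn_add2l (size ms)) subnKC.
by rewrite tauD tau_x tau_y big_cat !tauD !addrA (ACl (1*3*2*4)).
Qed.

Lemma reducibleZ k x : markov_reducible x -> markov_reducible (k *: x).
Proof.
move=> [b [ms [Bb Mms tau_x]]].
exists (k *: b), [seq k *: m | m <- ms]; split; first exact: sub2_scale.
  move=> i; rewrite size_map => lt_i; rewrite (nth_map 0) //.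
  have [a [a' [eps [Ba Ba' ->]]]] := Mms i lt_i.
  by exists (k *: a), a', eps; rewrite !scalerAl; split=> //; apply: sub2_scale.
by rewrite tauZ tau_x big_map -scaler_sumr -scalerDr tauZ.
Qed.

Lemma reducible_tau x y : tau x = tau y -> markov_reducible y -> markov_reducible x.
Proof. by move=> tau_xy [b [ms [Bb Mms tau_y]]]; exists b, ms; rewrite tau_xy. Qed.

Lemma reducible_solve a x f : a \is a GRing.unit ->
  markov_reducible (a *: x + f) -> markov_reducible f -> markov_reducible x.
Proof.
move=> a_unit Ry Rf.
have -> : x = a^-1 *: (a *: x + f) + (- a^-1) *: f.
  by rewrite scalerDr scalerA mulVr // scale1r scaleNr addrK.
by apply: reducibleD; apply: reducibleZ.
Qed.

Lemma subalg_hecke_idem x : in_subalg2 g1 u x -> in_subalg2 g1 u (hecke_idem q x).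
Proof. by move=> Bx; rewrite hecke_idem.unlock; apply/sub2_scale/sub2_add/sub2_1. Qed.

Lemma subalg_f1f2'_pow k : in_subalg2 g1 u ((f1 * f2') ^+ k).
Proof.
elim: k => [|k IH]; first exact: sub2_1.
rewrite exprS; apply/sub2_mul/IH/sub2_mul.
  exact/subalg_hecke_idem/sub2_a.
exact/subalg_hecke_idem/sub2_b.
Qed.

Lemma reducible_mul_f2 b : in_subalg2 g1 u b -> markov_reducible (b * f2).
Proof.
move=> Bb; rewrite /f2 hecke_idem.unlock -scalerAr mulrDr mulr1.
by apply/reducibleZ/reducibleD; [apply: reducible_subalg_g2 | apply: reducible_subalg].
Qed.

Lemma reducible_tlE i : markov_reducible (tlE i).
Proof.
rewrite -tlE_mod /tlE modn_mod; case: (mod3_cases i) => -> /=.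
- by apply/reducible_subalg/subalg_hecke_idem/sub2_a.
- by rewrite -[f2]mul1r; apply/reducible_mul_f2/sub2_1.
apply: (@reducible_tau _ f2'); last by apply/reducible_subalg/subalg_hecke_idem/sub2_b.
by rewrite f2'_conj tauC mulrA g2K.2 mul1r.
Qed.

Lemma reducible_wspan_of n x :
  (forall i b m, (m <= n)%N -> markov_reducible (word i b m)) ->
  wspan n x -> markov_reducible x.
Proof.
move=> Rwords; elim=> [i b m le_mn | | y z _ Ry _ Rz | k y _ Ry].
- exact: Rwords.
- exact/reducible_subalg/subalg0.
- exact: reducibleD.
- exact: reducibleZ.
Qed.

Lemma reducible_DU_pow k :
  (forall x, wspan (3 * k + 2) x -> markov_reducible x) ->
  markov_reducible (D ^+ k.+1) /\ markov_reducible (U ^+ k.+1).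
Proof.
move=> Rspan.
have be_unit : be \is a GRing.unit by rewrite unitrN unitrM q1_unit unitrV.
have ga_unit : ga \is a GRing.unit.
  have -> : ga = - q^-1.
    by rewrite /ga /be mulrDl mul1r divrr // opprD addrAC addNr add0r.
  by rewrite unitrN unitrV.
have RD : markov_reducible (D ^+ k.+1).
  have [f span_f fE] := f1f2'_pow_f2_approx k.
  apply: (@reducible_solve (ga * be ^+ k) _ f); first by rewrite unitrM ga_unit unitrX.
    by rewrite -fE mulrA -exprSr; apply/reducible_mul_f2/subalg_f1f2'_pow.
  exact: Rspan.
split=> //.
have [f span_f fE] := f1f2'_pow_approx k.
apply: (@reducible_solve (al ^+ k.+1) _ (be ^+ k.+1 *: D ^+ k.+1 + f)).
- by rewrite unitrX // unitrN.
- by rewrite addrA -fE; apply/reducible_subalg/subalg_f1f2'_pow.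
- by apply: reducibleD; [apply: reducibleZ | apply: Rspan].
Qed.

Lemma reducible_word k i b m : (m <= 3 * k + 2)%N -> markov_reducible (word i b m).
Proof.
elim: k i b m => [|k IH] i b m le_m.
  case: m le_m => [|[|[|//]]] _.
  - exact/reducible_subalg/sub2_1.
  - by rewrite /= mulr1; apply: reducible_tlE.
  - apply: (@reducible_tau _ (kap *: tlE i)); last exact/reducibleZ/reducible_tlE.
    by rewrite tauZ (tau_word2 tlE_idem tlE_tl tauC tauZ).
have [RD RU] := reducible_DU_pow (fun x => reducible_wspan_of (x := x) IH).
have n0 : (3 * k.+1 %% 3 = 0)%N by rewrite mulnC modnMl.
have R3 i' b' : markov_reducible (word i' b' (3 * k.+1)).
  apply: (@reducible_tau _ (word 0 b' (3 * k.+1))).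
    exact: (tau_word_start tlE_mod tauC).
  by rewrite (word_pow tlE_mod); case: b'; rewrite ?wordU ?wordD.
case: (leqP m (3 * k + 2)) => [le_m' | gt_m]; first exact: IH.
have : m = 3 * k.+1 \/ m = (3 * k.+1).+1 \/ m = (3 * k.+1).+2 by lia.
case=> [->|[->|->]]; first exact: R3.
- apply: (@reducible_tau _ (word i b (3 * k.+1))) => //.
  exact: (tau_word_succ tlE_mod tlE_idem tauC).
- apply: (@reducible_tau _ (kap *: word (i + step b) b (3 * k.+1))).
    by rewrite tauZ (tau_word_succ2 tlE_mod tlE_tl tauC tauZ).
  exact: reducibleZ.
Qed.

Lemma reducible_wspan n x : wspan n x -> markov_reducible x.
Proof. by apply: reducible_wspan_of => i b m le_mn; apply: (@reducible_word n); lia. Qed.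

Lemma reducible_g1u_word r s :
  markov_reducible ((g1 * u) ^+ r * g1 * g2 * (g1 * u) ^+ s * g1 * g2).
Proof.
have span_affine f a : wspan 1 f -> wspan 1 (a *: f - 1).
  by move=> span_f; apply: wspanB (wspanZ _ span_f) (wspan1 _ _).
have span_g1 : wspan 1 g1.
  by rewrite -(hecke_idemK q1_unit g1); apply/span_affine/wspan_f1.
have span_g2 : wspan 1 g2.
  by rewrite -(hecke_idemK q1_unit g2); apply/span_affine/wspan_f2.
have span_g3 : wspan 1 g3.
  by rewrite -(hecke_idemK q1_unit g3); apply/span_affine/wspan_f3.
have span_g2inv : wspan 1 g2inv by rewrite g2invE; apply/span_affine/wspan_f2.
have span_g1u := spanM span_g1 (spanM (spanM span_g2 span_g3) span_g2inv).
apply: reducible_wspan.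
exact: spanM (spanM (spanM (spanM (spanM (spanX r span_g1u) span_g1) span_g2)
  (spanX s span_g1u)) span_g1) span_g2.
Qed.

End Reduction.

Unset Implicit Arguments.
Theorem lemma4p7 (K : idomainType) (q : K)
    (hchar : [pchar K] =i pred0)
    (hq : q \is a GRing.unit) (hsq : exists t : K, q = t ^+ 2)
    (hq1 : q + 1 \is a GRing.unit)
    (A : algType K) (g1 g2 g3 g2inv : A)
    (hrel : TL3hat_rels q g1 g2 g3)
    (hinv : g2 * g2inv = 1 /\ g2inv * g2 = 1)
    (tau : A -> K) (htau : is_trace tau)
    (r s : nat) (hr : (0 < r)%N) (hrs : (r <= s)%N) :
  let X := g2 * g1 * g3 in
  let u := g2 * g3 * g2inv in
  exists h : nat, (h <= s)%N /\
  exists c : nat -> A, (forall j, (j <= h)%N -> in_subalg2 g1 u (c j)) /\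
  exists ms : seq A, (forall i, (i < size ms)%N -> markov_elt g1 u g2 (nth 0 ms i)) /\
    tau ((g1 * u) ^+ r * g1 * g2 * (g1 * u) ^+ s * g1 * g2)
    = tau (\sum_(j < h.+1) c j * X ^+ j + \sum_(m <- ms) m).
Proof.
(* Every element reduces, so [h = 0] suffices. *)
move=> X u.
have [b [ms [Bb Mms tau_eq]]] := reducible_g1u_word hq hq1 hrel hinv htau r s.
exists 0%N; split=> //; exists (fun _ => b); split=> //; exists ms; split=> //.
by rewrite tau_eq big_ord1 expr0 mulr1.
Qed.
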